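(* If $G\in SVS$, then for every clique $C$ of $G$ the branch graph $B(G/C)$ is perfect.
   Context: All graphs are finite, simple and connected; a clique is a maximal complete set. A graph is split if its vertex set partitions into a stable set $S$ and a clique $K$. For $n\geq 4$, the $n$-sun $S_n$ is the split graph with stable set $\{s_1,\dots,s_n\}$, central clique $\{v_1,\dots,v_n\}$, $N(s_i)=\{v_i,v_{i+1}\}$ for $1\le i\le n-1$ and $N(s_n)=\{v_n,v_1\}$. A split graph $G$ with partition $(S,K)$ belongs to $SVS$ if: $G$ is VPT (a vertex-intersection graph of paths in a tree); every $v\in K$ satisfies $|N(v)\cap S|\le 2$; and whenever $S_k$ with $k=4$ or $k$ odd, $k\ge5$, is an induced subgraph of $G$, some $v\in K$ is adjacent to two non-consecutive vertices of the stable set of that $S_k$. For a clique $C$ of $G$, the branch graph $B(G/C)$ has vertex set the vertices of $V(G)\setminus C$ adjacent to some vertex of $C$, two such vertices $v,w$ being adjacent iff (1) $vw\notin E(G)$; (2) some vertex of $C$ is adjacent to both; (3) there exist $v',w'\in C$ with $v'$ adjacent to $v$ but not $w$, and $w'$ adjacent to $w$ but not $v$. A graph is perfect iff it contains no induced $C_{2n+1}$ or complement of $C_{2n+1}$ with $n\ge2$. *)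

From mathcomp Require Import all_boot.
Set Implicit Arguments. Unset Strict Implicit. Unset Printing Implicit Defensive.

Definition simple_graph (T : finType) (e : rel T) : Prop :=
  symmetric e /\ irreflexive e.

Definition connected_graph (T : finType) (e : rel T) : Prop :=
  forall x y : T, connect e x y.

Definition complete_set (T : finType) (e : rel T) (A : {set T}) : Prop :=
  forall x y, x \in A -> y \in A -> x != y -> e x y.

Definition stable_set (T : finType) (e : rel T) (A : {set T}) : Prop :=
  forall x y, x \in A -> y \in A -> ~~ e x y.

Definition is_clique (T : finType) (e : rel T) (C : {set T}) : Prop :=
  complete_set e C /\
  forall B : {set T}, complete_set e B -> C \subset B -> B = C.

Definition split_partition (T : finType) (e : rel T) (S K : {set T}) : Prop :=
  stable_set e S /\ is_clique e K /\ S :&: K = set0 /\ S :|: K = [set: T].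

Definition acyclic (U : finType) (tr : rel U) : Prop :=
  forall (x : U) (p : seq U),
    uniq (x :: p) -> path tr x p -> 2 <= size p -> ~~ tr (last x p) x.

Definition is_tree (U : finType) (tr : rel U) : Prop :=
  simple_graph tr /\ connected_graph tr /\ acyclic tr.

Definition tree_path (U : finType) (tr : rel U) (p : seq U) : bool :=
  if p is x :: q then path tr x q && uniq p else false.

Definition VPT (T : finType) (e : rel T) : Prop :=
  exists (U : finType) (tr : rel U), is_tree tr /\
    exists P : T -> seq U, (forall v, tree_path tr (P v)) /\
      forall u v, u != v -> e u v = has (mem (P v)) (P u).

Definition cyc_adj (k : nat) (i j : 'I_k) : bool :=
  (val j == (val i).+1 %% k) || (val i == (val j).+1 %% k).

Definition induced_sun (T : finType) (e : rel T) (k : nat)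
    (s v : 'I_k -> T) : Prop :=
  injective s /\ injective v /\ (forall i j, s i != v j) /\
  (forall i j, i != j -> ~~ e (s i) (s j)) /\
  (forall i j, i != j -> e (v i) (v j)) /\
  (forall i j, e (s i) (v j) = (val j == val i) || (val j == (val i).+1 %% k)).

Definition SVS (T : finType) (e : rel T) (S K : {set T}) : Prop :=
  split_partition e S K /\ VPT e /\
  (forall v, v \in K -> #|[set x in S | e v x]| <= 2) /\
  (forall (k : nat) (s w : 'I_k -> T),
     4 <= k -> (k == 4) || odd k -> induced_sun e s w ->
     exists x, x \in K /\
       exists i j : 'I_k, i != j /\ ~~ cyc_adj i j /\ e x (s i) /\ e x (s j)).

Definition branch_set (T : finType) (e : rel T) (C : {set T}) : {set T} :=
  [set w | (w \notin C) && [exists c in C, e w c]].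

Definition branch_rel (T : finType) (e : rel T) (C : {set T}) : rel T :=
  fun v w =>
    [&& v \in branch_set e C, w \in branch_set e C, v != w, ~~ e v w,
        [exists c in C, e c v && e c w],
        [exists v' in C, e v' v && ~~ e v' w] &
        [exists w' in C, e w' w && ~~ e w' v]].

(* perfect graph (on vertex set A, edges r): no induced odd hole C_{2n+1}
   and no induced odd antihole, n >= 2 (as stated in the paper's context) *)
Definition induced_odd_hole (T : finType) (A : {set T}) (r : rel T) : Prop :=
  exists (m : nat) (f : 'I_m -> T), odd m /\ 5 <= m /\ injective f /\
    (forall i, f i \in A) /\ (forall i j, r (f i) (f j) = cyc_adj i j).

Definition induced_odd_antihole (T : finType) (A : {set T}) (r : rel T) : Prop :=
  exists (m : nat) (f : 'I_m -> T), odd m /\ 5 <= m /\ injective f /\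
    (forall i, f i \in A) /\
    (forall i j, r (f i) (f j) = (i != j) && ~~ cyc_adj i j).

Definition perfect_on (T : finType) (A : {set T}) (r : rel T) : Prop :=
  ~ induced_odd_hole A r /\ ~ induced_odd_antihole A r.

From mathcomp Require Import all_boot zify.
Set Implicit Arguments. Unset Strict Implicit. Unset Printing Implicit Defensive.

(* Let G be split with stable set S and central clique K, every vertex of K
   having at most two neighbours in S.  A clique C of G either contains some
   s in S, or is contained in K and hence equals K.
   - If s \in C, every branch edge vw needs a common neighbour c \in C \cap K of
     v, w \in S; then c also sees s, i.e. three vertices of S: B(G/C) is edgeless.
   - If C = K, an induced cycle v_0 ... v_{k-1} of B(G/K) (consecutive vertices
     sharing a neighbour w_i in K) yields an induced k-sun of G.  For k = 4 or k
     odd the SVS condition gives x \in K seeing two non-consecutive v_i, v_j; the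
     degree bound then forces v_i v_j to be a branch edge, a contradiction.
   Perfection follows from a purely graph-theoretic reduction: a graph with no
   induced C_4 and no induced odd cycle of length >= 5 has no odd hole, and no
   odd antihole either, since the complement of C_5 is C_5 and the complement of
   C_m, m >= 7, contains the induced 4-cycle v_0 v_3 v_1 v_4. *)

Lemma val_ordS k (i : 'I_k) : ordS i = (if i.+1 == k then 0 else i.+1) :> nat.
Proof.
rewrite /=; case: eqP => [->|ne]; first by rewrite modnn.
by rewrite modn_small //; have := ltn_ord i; lia.
Qed.

Lemma ordS_neq k (i : 'I_k) : 1 < k -> ordS i != i.
Proof.
move=> k_gt1; rewrite -val_eqE [val _]val_ordS /=; have := ltn_ord i.
by case: ifP => /eqP; lia.
Qed.

Lemma ordSS_neq k (i : 'I_k) : 2 < k -> ordS (ordS i) != i.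
Proof.
move=> k_gt2; rewrite -val_eqE [val (ordS (ordS _))]val_ordS.
rewrite [val (ordS _)]val_ordS /=.
have := ltn_ord i.
by case: ifP => /eqP; case: ifP => /eqP; lia.
Qed.

Lemma ord_pred_neq k (i : 'I_k) : 1 < k -> ord_pred i != i.
Proof.
by move=> k_gt1; rewrite -(inj_eq (@ordS_inj k)) ord_predK eq_sym ordS_neq.
Qed.

Lemma ord_pred2_neq k (i : 'I_k) : 2 < k -> ord_pred (ord_pred i) != i.
Proof.
move=> k_gt2; rewrite -(inj_eq (@ordS_inj k)) -(inj_eq (@ordS_inj k)).
by rewrite !ord_predK eq_sym ordSS_neq.
Qed.

Lemma cyc_adj_ordS k (i j : 'I_k) : cyc_adj i j = (j == ordS i) || (i == ordS j).
Proof. by []. Qed.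

Lemma cyc_adj_small k (i j : 'I_k) : i.+1 < k -> j.+1 < k ->
  cyc_adj i j = (j == i.+1 :> nat) || (i == j.+1 :> nat).
Proof. by move=> ik jk; rewrite /cyc_adj !modn_small. Qed.

(* i |-> 2i mod 5 maps the pentagon onto its complement, the pentagram. *)
Definition pentagon_star (i : 'I_5) : 'I_5 := inord ((2 * i) %% 5).

Lemma pentagon_star_inj : injective pentagon_star.
Proof.
move=> i j /(congr1 val); rewrite /pentagon_star /=.
case: i j => [[|[|[|[|[|?]]]]] ?] //; case=> [[|[|[|[|[|?]]]]] ?] //.
all: by rewrite !inordK // => _; apply: val_inj.
Qed.

Lemma pentagon_self_complementary (i j : 'I_5) :
  (pentagon_star i != pentagon_star j) &&
    ~~ cyc_adj (pentagon_star i) (pentagon_star j) = cyc_adj i j.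
Proof.
case: i j => [[|[|[|[|[|?]]]]] ?] //; case=> [[|[|[|[|[|?]]]]] ?] //.
all: by rewrite /pentagon_star /cyc_adj -!val_eqE /= !inordK.
Qed.

(* In the complement of C_m with m >= 6, the vertices 0, 3, 1, 4 induce C_4. *)
Section Square.
Variables (n : nat) (n_gt4 : 4 < n).
Definition square_in_antihole (i : 'I_4) : 'I_n.+1 := inord (nth 0 [:: 0; 3; 1; 4] i).

Lemma square_in_antihole_inj : injective square_in_antihole.
Proof.
move=> i j /(congr1 val); rewrite /square_in_antihole /=.
case: i j => [[|[|[|[|?]]]] ?] //; case=> [[|[|[|[|?]]]] ?] //.
all: by rewrite !inordK /=; try lia; move=> _; apply: val_inj.
Qed.

Lemma square_in_antihole_adj (i j : 'I_4) :
  (square_in_antihole i != square_in_antihole j) &&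
    ~~ cyc_adj (square_in_antihole i) (square_in_antihole j) = cyc_adj i j.
Proof.
case: i j => [[|[|[|[|?]]]] ?] //; case=> [[|[|[|[|?]]]] ?] //.
all: rewrite /square_in_antihole cyc_adj_small -?val_eqE /= ?inordK //; lia.
Qed.
End Square.

Definition induced_cycle (T : finType) (r : rel T) (k : nat) (f : 'I_k -> T) : Prop :=
  injective f /\ forall i j, r (f i) (f j) = cyc_adj i j.

(* A graph without induced C_4 and without induced odd cycles of length >= 5
   is perfect: odd antiholes contain one of these. *)
Lemma perfect_of_no_induced_cycle (T : finType) (A : {set T}) (r : rel T) :
  (forall k (f : 'I_k -> T), 4 <= k -> (k == 4) || odd k -> ~ induced_cycle r f) ->
  perfect_on A r.
Proof.
move=> no_cycle; split=> [[m [f [m_odd [m_ge5 [f_inj [_ f_hole]]]]]]|].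
  by apply: (no_cycle m f) => //; [exact: ltnW | rewrite m_odd orbT].
move=> [m [f [m_odd [m_ge5 [f_inj [_ f_anti]]]]]].
have [m_eq5 | m_neq5] := eqVneq m 5.
  subst m; apply: (no_cycle 5 (f \o pentagon_star)) => //; split.
    by move=> i j /f_inj /pentagon_star_inj.
  by move=> i j; rewrite /= f_anti pentagon_self_complementary.
case: m m_odd m_ge5 m_neq5 f f_inj f_anti => // n _ n_ge4 n_neq4 f f_inj f_anti.
have n_gt4 : 4 < n by rewrite ltn_neqAle eq_sym n_neq4.
apply: (no_cycle 4 (f \o @square_in_antihole n)) => //; split.
  by move=> i j /f_inj /(square_in_antihole_inj n_gt4).
by move=> i j; rewrite /= f_anti (square_in_antihole_adj n_gt4).
Qed.

Lemma edgeless_no_induced_cycle (T : finType) (r : rel T) k (f : 'I_k -> T) :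
  0 < k -> (forall v w, ~~ r v w) -> ~ induced_cycle r f.
Proof.
move=> k_gt0 no_edge [_ f_cycle]; pose i : 'I_k := Ordinal k_gt0.
by move: (no_edge (f i) (f (ordS i))); rewrite f_cycle /cyc_adj eqxx.
Qed.

Lemma in_complement_of_partition (T : finType) (S K : {set T}) :
  S :&: K = set0 -> S :|: K = [set: T] -> forall x, (x \in K) = (x \notin S).
Proof.
move=> disj cov x; have := in_setT x; rewrite -cov inE.
have := in_set0 x; rewrite -disj inE.
by case: (x \in S) (x \in K) => [] [].
Qed.

Lemma branch_rel_outside (T : finType) (e : rel T) (C : {set T}) v w :
  branch_rel e C v w -> [/\ v \notin C, w \notin C & v != w].
Proof.
by case/and5P; rewrite /branch_set !inE => /andP [vC _] /andP [wC _] vw.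
Qed.

Section BranchGraphOfSplit.
Variables (T : finType) (e : rel T) (S K : {set T}).
Hypothesis e_sym : symmetric e.
Hypothesis S_stable : stable_set e S.
Hypothesis K_complete : complete_set e K.
Hypothesis K_compl : forall x, (x \in K) = (x \notin S).
Hypothesis K_deg : forall v, v \in K -> #|[set x in S | e v x]| <= 2.

Lemma nbr_of_S_in_K x y : y \in S -> e x y -> x \in K.
Proof.
move=> yS xy; rewrite K_compl; apply/negP => xS.
by move: (S_stable xS yS); rewrite xy.
Qed.

Lemma K_nbr_in_S c a b d : c \in K -> a \in S -> b \in S -> d \in S -> a != b ->
  e c a -> e c b -> e c d -> d = a \/ d = b.
Proof.
move=> cK aS bS dS ab ca cb cd.
have [->|da] := eqVneq d a; first by left.
have [->|db] := eqVneq d b; first by right.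
have sub : d |: [set a; b] \subset [set x in S | e c x].
  by apply/subsetP => x; rewrite !inE => /or3P [] /eqP ->; rewrite ?aS ?bS ?dS.
have := leq_trans (subset_leq_card sub) (K_deg cK).
by rewrite cardsU1 cards2 !inE ab negb_or da db.
Qed.

Lemma branch_edge_in_S C v w : branch_rel e C v w ->
  [/\ v \in S, w \in S & exists2 c, c \in C & [/\ c \in K, e c v & e c w]].
Proof.
move=> vBw; have [vC wC vw] := branch_rel_outside vBw.
case/and5P: vBw => _ _ _ nvw /and3P [/existsP [c /andP [cC /andP [cv cw]]]
  /existsP [v' /andP [v'C /andP [v'v v'w]]] /existsP [w' /andP [w'C /andP [w'w w'v]]]].
have K_private u x y : u \in K -> u \notin C -> x \in S -> y \in C ->
    e y x -> ~~ e y u -> False.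
  move=> uK uC xS yC yx /negP; apply; apply: (K_complete _ uK).
    exact: nbr_of_S_in_K yx.
  by apply: contraNneq uC => <-.
have vS : v \in S.
  rewrite -[v \in S]negbK -K_compl; apply/negP => vK.
  have wS : w \in S.
    rewrite -[w \in S]negbK -K_compl; apply: contraNN nvw => wK.
    exact: K_complete vK wK vw.
  exact: K_private vK vC wS w'C w'w w'v.
have wS : w \in S.
  rewrite -[w \in S]negbK -K_compl; apply/negP => wK.
  exact: K_private wK wC vS v'C v'v v'w.
by split=> //; exists c => //; split=> //; exact: nbr_of_S_in_K cv.
Qed.

Lemma no_branch_edge_of_S_in_clique C s : complete_set e C -> s \in C -> s \in S ->
  forall v w, ~~ branch_rel e C v w.
Proof.
move=> C_complete sC sS v w; apply/negP => vBw.
have [vC wC vw] := branch_rel_outside vBw.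
have [vS wS [c cC [cK cv cw]]] := branch_edge_in_S vBw.
have cs : e c s.
  by apply: C_complete => //; apply: contraTneq sS => <-; rewrite -K_compl.
by case: (K_nbr_in_S cK vS wS sS vw cv cw cs) => [sv|sw];
  [rewrite -sv sC in vC | rewrite -sw sC in wC].
Qed.

Lemma clique_meets_S_or_is_K C : is_clique e C -> (exists2 s, s \in C & s \in S) \/ C = K.
Proof.
move=> [_ C_max].
have [/existsP [s /andP [sC sS]] | noS] := boolP [exists s in C, s \in S].
  by left; exists s.
right; apply/esym; apply: C_max K_complete _; apply/subsetP => x xC; rewrite K_compl.
by apply: contra noS => xS; apply/existsP; exists x; rewrite xC.
Qed.

Lemma branch_edge_of_private_nbrs a b x p q : a \in S -> b \in S -> a != b ->
  x \in K -> e x a -> e x b -> p \in K -> e p a -> ~~ e p b ->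
  q \in K -> e q b -> ~~ e q a -> branch_rel e K a b.
Proof.
move=> aS bS ab xK xa xb pK pa pb qK qb qa.
rewrite /branch_rel /branch_set !inE !K_compl aS bS ab (S_stable aS bS) /=.
apply/and5P; split; apply/existsP.
- by exists x; rewrite xK e_sym.
- by exists x; rewrite xK e_sym.
- by exists x; rewrite xK xa xb.
- by exists p; rewrite pK pa pb.
- by exists q; rewrite qK qb qa.
Qed.

(* Key step: if a, b \in S have a common neighbour in K and branch edges to
   vertices other than b, resp. a, then ab is a branch edge: the neighbour of
   a and a' cannot see b by the degree bound, and symmetrically. *)
Lemma branch_edge_of_common_nbr a b a' b' x : a \in S -> b \in S -> a != b ->
  branch_rel e K a a' -> a' != b -> branch_rel e K b b' -> b' != a ->
  x \in K -> e x a -> e x b -> branch_rel e K a b.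
Proof.
move=> aS bS ab aBa' a'b bBb' b'a xK xa xb.
have [_ _ aa'] := branch_rel_outside aBa'; have [_ _ bb'] := branch_rel_outside bBb'.
have [_ a'S [p _ [pK pa pa']]] := branch_edge_in_S aBa'.
have [_ b'S [q _ [qK qb qb']]] := branch_edge_in_S bBb'.
apply: (branch_edge_of_private_nbrs aS bS ab xK xa xb pK pa _ qK qb).
  apply/negP => pb; have [ba|ba'] := K_nbr_in_S pK aS a'S bS aa' pa pa' pb.
    by rewrite ba eqxx in ab.
  by rewrite ba' eqxx in a'b.
apply/negP => qa; have [ab'|ab'] := K_nbr_in_S qK bS b'S aS bb' qb qb' qa.
  by rewrite ab' eqxx in ab.
by rewrite ab' eqxx in b'a.
Qed.

(* A cycle of stable vertices, consecutive ones sharing a central neighbour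
   w_i, together with these w_i induces a sun; the degree bound forbids all
   other adjacencies. *)
Lemma induced_sun_of_cycle k (g w : 'I_k -> T) : 2 < k -> injective g ->
  (forall i, g i \in S) -> (forall i, w i \in K) ->
  (forall i, e (w i) (g (ord_pred i))) -> (forall i, e (w i) (g i)) ->
  induced_sun e g w.
Proof.
move=> k_gt2 g_inj gS wK w_pred w_cur.
have w_nbrs i j : e (w j) (g i) -> i = j \/ i = ord_pred j.
  have ne : g j != g (ord_pred j).
    by rewrite (inj_eq g_inj) eq_sym (ord_pred_neq _ (ltnW k_gt2)).
  move=> wj_gi.
  have := K_nbr_in_S (wK j) (gS j) (gS _) (gS i) ne (w_cur j) (w_pred j) wj_gi.
  by case=> /g_inj; auto.
have w_inj : injective w.
  move=> i j wij; apply/eqP/negPn/negP => ij.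
  have [ji|i_pred] : i = j \/ i = ord_pred j by apply: w_nbrs; rewrite -wij.
    by rewrite ji eqxx in ij.
  have [pi_j|pi_pj] : ord_pred i = j \/ ord_pred i = ord_pred j.
    by apply: w_nbrs; rewrite -wij.
  by move: (ord_pred2_neq j k_gt2); rewrite -i_pred pi_j eqxx.
  by rewrite (ord_pred_inj pi_pj) eqxx in ij.
split=> //; split=> //; split.
  by move=> i j; apply: contraTneq (gS i) => ->; rewrite -K_compl.
split; first by move=> i j _; apply: S_stable.
split; first by move=> i j ij; apply: K_complete; rewrite ?wK ?(inj_eq w_inj).
move=> i j; rewrite e_sym.
have -> : (val j == val i) || (val j == (val i).+1 %% k) = (j == i) || (j == ordS i).
  by [].
apply/idP/idP.
  by case/w_nbrs=> ->; rewrite ?ord_predK eqxx ?orbT.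
by case/orP=> /eqP ->; rewrite // -{2}(ordSK i).
Qed.

Hypothesis sun_chord : forall (k : nat) (s w : 'I_k -> T),
  4 <= k -> (k == 4) || odd k -> induced_sun e s w ->
  exists x, x \in K /\
    exists i j : 'I_k, i != j /\ ~~ cyc_adj i j /\ e x (s i) /\ e x (s j).

Lemma branch_no_induced_cycle k (f : 'I_k -> T) :
  4 <= k -> (k == 4) || odd k -> ~ induced_cycle (branch_rel e K) f.
Proof.
move=> k_ge4 k_shape [f_inj f_cycle].
have next_edge i : branch_rel e K (f i) (f (ordS i)) by rewrite f_cycle cyc_adj_ordS eqxx.
have fS i : f i \in S by case: (branch_edge_in_S (next_edge i)).
have /fin_all_exists [w w_nbr] i :
    exists c, [/\ c \in K, e c (f (ord_pred i)) & e c (f i)].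
  have := next_edge (ord_pred i); rewrite ord_predK.
  by case/branch_edge_in_S=> _ _ [c _ c_nbr]; exists c.
have sun : induced_sun e f w.
  by apply: induced_sun_of_cycle (ltnW k_ge4) f_inj fS _ _ _ => i; case: (w_nbr i).
have [x [xK [i [j [ij [not_adj [xi xj]]]]]]] := sun_chord k_ge4 k_shape sun.
move: (not_adj); rewrite cyc_adj_ordS negb_or => /andP [ji' ij'].
have : branch_rel e K (f i) (f j).
  apply: (branch_edge_of_common_nbr (fS i) (fS j) _ (next_edge i) _ (next_edge j) _
           xK xi xj); by rewrite (inj_eq f_inj) // eq_sym.
by rewrite f_cycle (negbTE not_adj).
Qed.
End BranchGraphOfSplit.

Theorem mainTheorem13 (T : finType) (e : rel T) (S K : {set T}) :
  simple_graph e -> connected_graph e ->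
  SVS e S K ->
  forall C : {set T}, is_clique e C ->
  perfect_on (branch_set e C) (branch_rel e C).
Proof.
move=> [e_sym _] _ [[S_stable [[K_complete _] [disj cov]]] [_ [K_deg sun_chord]]].
have K_compl := in_complement_of_partition disj cov.
move=> C C_clique; apply: perfect_of_no_induced_cycle => k f k_ge4 k_shape.
have [[s sC sS] | ->] := clique_meets_S_or_is_K K_complete K_compl C_clique.
  apply: edgeless_no_induced_cycle; first exact: leq_trans k_ge4.
  case: C_clique => C_complete _.
  exact: (no_branch_edge_of_S_in_clique S_stable K_complete K_compl K_deg
           C_complete sC sS).
exact: (branch_no_induced_cycle e_sym S_stable K_complete K_compl K_deg sun_chord
         k_ge4 k_shape).
Qed.
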